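(* Let $\Delta\subset\mathbb{R}^n_{\ge0}$ be a Newton polyhedron with a loose edge $E$ whose endpoints are $a,b\in\mathbb{R}^n_{\ge0}$. Then for every $c\in\Delta$ and every $\xi\in\mathbb{R}^n_{\ge0}$ with $\langle\xi,a\rangle=\langle\xi,b\rangle$ one has $\langle\xi,c\rangle\ge\langle\xi,a\rangle$.
   Context: A Newton polyhedron is a set of the form $\mathrm{conv}(S)+\mathbb{R}^n_{\ge0}$ (convex hull of $S+\mathbb{R}^n_{\ge0}$) for a nonempty finite set $S\subset\mathbb{Z}^n_{\ge0}$. For $\xi\in\mathbb{R}^n_{\ge0}$, the face $\Delta^\xi=\{a\in\Delta:\langle\xi,a\rangle=\min_{b\in\Delta}\langle\xi,b\rangle\}$; it is compact iff $\xi\in\mathbb{R}^n_{>0}$. An edge is a face of dimension 1; a loose edge is a compact edge not contained in any compact face of dimension $\ge2$. *)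

From HB Require Import structures.
From mathcomp Require Import all_boot all_order all_algebra.
From mathcomp Require Import all_classical all_reals all_analysis.
Set Implicit Arguments. Unset Strict Implicit. Unset Printing Implicit Defensive.
Import Order.TTheory GRing.Theory Num.Theory.
Import numFieldNormedType.Exports.
Local Open Scope ring_scope.
Local Open Scope classical_set_scope.

Section Newton.
Variables (R : realType) (n : nat).
Notation pt := ('I_n -> R).

Definition dot (x y : pt) : R := \sum_(i < n) x i * y i.

Definition nonneg (x : pt) : Prop := forall i, 0 <= x i.

Definition conv_seq (S : seq pt) : set pt :=
  [set x | exists l : 'I_(size S) -> R,
     (forall j, 0 <= l j) /\ \sum_(j < size S) l j = 1 /\
     forall i, x i = \sum_(j < size S) l j * (nth (fun _ => 0) S j) i].

Definition newton_of (S : seq ('I_n -> nat)) : set pt :=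
  [set x | exists2 y, conv_seq [seq (fun i => (s i)%:R) | s <- S] y &
           forall i, y i <= x i].

Definition newton_polyhedron (D : set pt) : Prop :=
  exists S : seq ('I_n -> nat), S != [::] /\ D = newton_of S.

Definition face (D : set pt) (xi : pt) : set pt :=
  [set a | D a /\ forall b, D b -> dot xi a <= dot xi b].

Definition is_face (D F : set pt) : Prop :=
  exists2 xi, nonneg xi & F = face D xi.

(* k+1 affinely independent points of F  <=>  dim F >= k *)
Definition affinely_independent k (p : 'I_k.+1 -> pt) : Prop :=
  forall c : 'I_k.+1 -> R,
    (forall i, \sum_(j < k.+1) c j * (p j i - p ord0 i) = 0) ->
    forall j, j != ord0 -> c j = 0.

Definition dim_ge (F : set pt) (k : nat) : Prop :=
  exists p : 'I_k.+1 -> pt, (forall j, F (p j)) /\ affinely_independent p.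

Definition is_compact_face (D F : set pt) : Prop :=
  is_face D F /\ @compact (@prod_topology 'I_n (fun _ => (R : topologicalType))) F.
(* compactness w.r.t. the product (= Euclidean) topology on R^n *)

Definition is_edge (D E : set pt) : Prop :=
  is_face D E /\ dim_ge E 1 /\ ~ dim_ge E 2.

Definition loose_edge (D E : set pt) : Prop :=
  is_compact_face D E /\ is_edge D E /\
  ~ (exists F, is_compact_face D F /\ dim_ge F 2 /\ E `<=` F).

Definition segment (a b : pt) : set pt :=
  [set x | exists2 t : R, 0 <= t <= 1 & forall i, x i = (1 - t) * a i + t * b i].

End Newton.

From HB Require Import structures.
From mathcomp Require Import all_boot all_order all_algebra.
From mathcomp Require Import all_classical all_reals all_analysis.
From mathcomp Require Import ring lra.
Set Implicit Arguments. Unset Strict Implicit. Unset Printing Implicit Defensive.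
Import Order.TTheory GRing.Theory Num.Theory.
Import numFieldNormedType.Exports.
Local Open Scope ring_scope.
Local Open Scope classical_set_scope.

(* Since the loose edge E = [a, b] is the compact face of D in some direction xi0,
   every entry of xi0 is positive: a zero entry would let E run off to infinity in
   that coordinate.  If some c in D had <xi, c> < <xi, a>, so would some generator
   of D.  Tilting xi0 to zeta = xi0 + t xi, with t >= 0 the largest value for which
   zeta still attains its minimum on E, produces a face D^zeta containing E and a
   generator v with <xi, v> < <xi, a> = <xi, b>.  As zeta > 0 this face is compact,
   and a, b, v are affinely independent, so E lies in a compact face of dimension
   at least 2: E is not loose. *)

Lemma critical_tilt (R : realFieldType) (I : finType) (p q : I -> R) :
  (forall k, 0 <= p k) -> (exists j, 0 < q j) ->
  exists t, [/\ 0 <= t, forall k, t * q k <= p k & exists2 j, 0 < q j & t * q j = p j].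
Proof.
move=> p_ge0 [j0 qj0_gt0].
have [j qj_gt0 j_min] :=
  @arg_minP _ _ _ j0 (fun k => 0 < q k) (fun k => p k / q k) qj0_gt0.
have t_ge0 : 0 <= p j / q j by apply: divr_ge0; [exact: p_ge0 | exact: ltW].
exists (p j / q j); split=> //; last by exists j; rewrite // divfK ?gt_eqF.
move=> k; have [qk_gt0|qk_le0] := ltP 0 (q k).
  by rewrite -ler_pdivlMr //; exact: j_min.
exact: le_trans (mulr_ge0_le0 t_ge0 qk_le0) (p_ge0 k).
Qed.

Section NewtonPolyhedra.
Variables (R : realType) (n : nat).
Local Notation pt := ('I_n -> R).
Local Notation PT k := (@prod_topology 'I_k (fun _ => (R : topologicalType))).

Lemma continuous_lin_form k (w : 'I_k -> R) :
  continuous (fun l : PT k => \sum_(j < k) l j * w j).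
Proof.
apply: continuous_big => [[x y]|j _ l]; first exact: add_continuous.
apply: (@continuousM R (PT k) (fun l : PT k => l j) (fun _ => w j)).
  exact: proj_continuous.
exact: cst_continuous.
Qed.

Lemma continuous_into_prod (X : topologicalType) k (f : X -> PT k) :
  (forall i, continuous (fun x => f x i)) -> continuous f.
Proof.
move=> f_cont x; apply/cvg_sup => i.
apply: (@continuous_comp_initial _ _ _ (fun g : 'I_k -> R => g i)).
exact: f_cont.
Qed.

Lemma compact_unit_box k : @compact (PT k) [set l | forall j, 0 <= l j <= 1].
Proof.
have -> : [set l : PT k | forall j, 0 <= l j <= 1] =
          [set l | forall j, `[(0 : R), 1]%classic (l j)].
  by apply/seteqP; split=> l /= hl j; have := hl j; rewrite /= in_itv.
exact: tychonoff (fun _ => @segment_compact R 0 1).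
Qed.

Lemma sum_delta m (j : 'I_m) (f : 'I_m -> R) : \sum_(k < m) (k == j)%:R * f k = f j.
Proof.
by rewrite (bigD1 j) //= eqxx mul1r big1 ?addr0 // => k /negbTE ->; rewrite mul0r.
Qed.

Lemma dotC (x y : pt) : dot x y = dot y x.
Proof. by apply: eq_bigr => i _; rewrite mulrC. Qed.

Lemma dotDr (xi x y : pt) : dot xi (fun i => x i + y i) = dot xi x + dot xi y.
Proof. by rewrite /dot -big_split; apply: eq_bigr => i _; rewrite mulrDr. Qed.

Lemma dotBr (xi x y : pt) : dot xi (fun i => x i - y i) = dot xi x - dot xi y.
Proof. by rewrite /dot -sumrB; apply: eq_bigr => i _; rewrite mulrBr. Qed.

Lemma dotZr (xi x : pt) t : dot xi (fun i => t * x i) = t * dot xi x.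
Proof. by rewrite /dot mulr_sumr; apply: eq_bigr => i _; rewrite mulrCA. Qed.

Lemma dot_delta (xi : pt) i : dot xi (fun k => (k == i)%:R) = xi i.
Proof. by rewrite dotC /dot sum_delta. Qed.

Lemma dot_ler (xi x y : pt) :
  nonneg xi -> (forall i, x i <= y i) -> dot xi x <= dot xi y.
Proof. by move=> xi_ge0 xy; apply: ler_sum => i _; exact: ler_wpM2l. Qed.

Lemma eq_of_dot_pos_le (zeta x y : pt) : (forall i, 0 < zeta i) ->
  (forall i, x i <= y i) -> dot zeta y <= dot zeta x -> x = y.
Proof.
move=> zeta_gt0 xy yx_le; apply: funext => i.
have diff_ge0 k : true -> 0 <= zeta k * (y k - x k).
  by move=> _; apply: mulr_ge0; [exact: ltW | rewrite subr_ge0].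
have sum0 : \sum_k zeta k * (y k - x k) = 0.
  apply/eqP; rewrite eq_le sumr_ge0 ?andbT; last by move=> k; exact: diff_ge0.
  by rewrite (_ : \sum_k _ = dot zeta (fun k => y k - x k)) // dotBr subr_le0.
have /eqP := psumr_eq0P diff_ge0 sum0 (i := i) isT.
by rewrite mulf_eq0 gt_eqF //= subr_eq0 => /eqP ->.
Qed.

Lemma segment_start (a b : pt) : segment a b a.
Proof. by exists 0 => [|i]; rewrite ?lexx ?ler01 // subr0 mul1r mul0r addr0. Qed.

Lemma segment_end (a b : pt) : segment a b b.
Proof. by exists 1 => [|i]; rewrite ?lexx ?ler01 // subrr mul0r mul1r add0r. Qed.

Lemma dot_segment (xi a b x : pt) :
  segment a b x -> dot xi a = dot xi b -> dot xi x = dot xi a.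
Proof.
move=> [t _ x_eq] xi_ab.
have -> : x = (fun i => (1 - t) * a i + t * b i) by apply: funext.
by rewrite dotDr !dotZr -xi_ab -mulrDl subrK mul1r.
Qed.

Lemma segment_dim_ge1 (a b : pt) : dim_ge (segment a b) 1 -> exists i, a i != b i.
Proof.
move=> [p [p_seg p_indep]]; apply: contrapT => no_coord.
have ab_eq i : a i = b i.
  by apply/eqP/negPn/negP => ab_i; apply: no_coord; exists i.
have p_eq j i : p j i = a i by have [t _ ->] := p_seg j; rewrite -ab_eq; ring.
have /eqP : (1 : R) = 0.
  apply: (p_indep (fun _ => 1) _ (@ord_max 1)) => // i.
  by apply: big1 => j _; rewrite !p_eq subrr mulr0.
by rewrite oner_eq0.
Qed.

Lemma dim_ge2_of_dot (F : set pt) (xi a b v : pt) i0 :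
  F a -> F b -> F v -> a i0 != b i0 ->
  dot xi a = dot xi b -> dot xi v != dot xi a -> dim_ge F 2.
Proof.
move=> Fa Fb Fv ab_i0 xi_ab xi_v.
exists (fun j : 'I_3 => nth a [:: a; b; v] j); split.
  by case=> [[|[|[|k]]] hk].
move=> c c_comb.
pose c1 := c (lift ord0 ord0); pose c2 := c (lift ord0 (lift ord0 ord0)).
have comb0 i : c1 * (b i - a i) + c2 * (v i - a i) = 0.
  by have := c_comb i; rewrite !big_ord_recl big_ord0 /= subrr mulr0 add0r addr0.
have c2_0 : c2 = 0.
  have : dot xi (fun i => c1 * (b i - a i) + c2 * (v i - a i)) = 0.
    by rewrite /dot big1 // => i _; rewrite comb0 mulr0.
  rewrite dotDr !dotZr !dotBr -xi_ab subrr mulr0 add0r => /eqP.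
  by rewrite mulf_eq0 subr_eq0 (negbTE xi_v) orbF => /eqP.
have c1_0 : c1 = 0.
  have /eqP := comb0 i0; rewrite c2_0 mul0r addr0.
  by rewrite mulf_eq0 subr_eq0 [b i0 == _]eq_sym (negbTE ab_i0) orbF => /eqP.
case=> [[|[|[|k]]] hk] // _.
  by have -> : Ordinal hk = lift ord0 ord0 by exact: val_inj.
by have -> : Ordinal hk = lift ord0 (lift ord0 ord0) by exact: val_inj.
Qed.

Definition gens (S : seq ('I_n -> nat)) : seq pt := [seq (fun i => (s i)%:R) | s <- S].

Definition gen S (j : 'I_(size (gens S))) : pt := nth (fun _ => 0) (gens S) j.

Arguments gen : clear implicits.

Definition comb S (l : 'I_(size (gens S)) -> R) : pt :=
  fun i => \sum_j l j * gen S j i.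

Arguments comb : clear implicits.

Lemma dot_comb (xi : pt) S l : dot xi (comb S l) = \sum_j l j * dot xi (gen S j).
Proof.
rewrite /dot /comb; under eq_bigr do rewrite mulr_sumr.
rewrite exchange_big; apply: eq_bigr => j _; rewrite mulr_sumr.
by apply: eq_bigr => i _; rewrite mulrCA.
Qed.

Lemma newton_of_gen S j : newton_of S (gen S j).
Proof.
exists (gen S j) => //; exists (fun k => (k == j)%:R); split=> [k|]; first exact: ler0n.
split=> [|i]; last by rewrite sum_delta.
by rewrite (eq_bigr (fun k => (k == j)%:R * 1)) ?sum_delta // => k _; rewrite mulr1.
Qed.

Lemma newton_of_upward S (x y : pt) :
  newton_of S x -> (forall i, x i <= y i) -> newton_of S y.
Proof. by move=> [z z_conv zx] xy; exists z => // i; exact: le_trans (zx i) (xy i). Qed.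

Lemma newton_of_lb S (xi : pt) beta x : nonneg xi ->
  (forall j, beta <= dot xi (gen S j)) -> newton_of S x -> beta <= dot xi x.
Proof.
move=> xi_ge0 gen_lb [y [l [l_ge0 [l_sum y_eq]]] yx].
apply: le_trans (dot_ler xi_ge0 yx).
have -> : y = comb S l by apply: funext => i; rewrite y_eq.
rewrite dot_comb -[beta]mul1r -l_sum mulr_suml.
by apply: ler_sum => j _; exact: ler_wpM2l.
Qed.

Lemma newton_of_gen_lt S (xi : pt) beta x : nonneg xi ->
  newton_of S x -> dot xi x < beta -> exists j, dot xi (gen S j) < beta.
Proof.
move=> xi_ge0 Dx x_lt; apply: contrapT => no_gen.
suff : beta <= dot xi x by rewrite leNgt x_lt.
apply: newton_of_lb xi_ge0 _ Dx => j; rewrite leNgt; apply/negP => j_lt.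
by apply: no_gen; exists j.
Qed.

Lemma face_dot_eq (D : set pt) xi x y : face D xi x -> face D xi y -> dot xi x = dot xi y.
Proof. by move=> [Dx x_min] [Dy y_min]; apply/eqP; rewrite eq_le x_min // y_min. Qed.

Lemma face_shift (D : set pt) xi x i T :
  (forall y z, D y -> (forall k, y k <= z k) -> D z) ->
  xi i = 0 -> 0 <= T -> face D xi x -> face D xi (fun k => x k + T * (k == i)%:R).
Proof.
move=> D_upward xi_i T_ge0 [Dx x_min]; split.
  by apply: D_upward Dx _ => k; rewrite lerDl mulr_ge0.
by move=> y Dy; rewrite dotDr dotZr dot_delta xi_i mulr0 addr0; exact: x_min.
Qed.

Lemma segment_face_dir_pos S (xi0 a b : pt) : nonneg xi0 ->
  face (newton_of S) xi0 = segment a b -> forall i, 0 < xi0 i.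
Proof.
move=> xi0_ge0 E_eq i; rewrite lt_def xi0_ge0 andbT; apply/eqP => xi0_i.
pose T := `|b i - a i| + 1.
have a_face : face (newton_of S) xi0 a by rewrite E_eq; exact: segment_start.
have T_ge0 : 0 <= T by rewrite addr_ge0.
have := face_shift (@newton_of_upward S) xi0_i T_ge0 a_face; rewrite E_eq.
case=> t /andP[t_ge0 t_le1] /(_ i); rewrite eqxx mulr1 /T => eq_i.
have := ler_norm (b i - a i); have := normr_ge0 (b i - a i); nra.
Qed.

Lemma face_newton_compact S (zeta : pt) : (forall i, 0 < zeta i) ->
  @compact (PT n) (face (newton_of S) zeta).
Proof.
move=> zeta_gt0.
have [->|/set0P[x0 x0_face]] := eqVneq (face (newton_of S) zeta) set0.
  exact: compact0.
(* Since zeta > 0, a point of the face equals its convex part, so the face is the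
   image of a compact set of weights; the constraint [\sum_j l j * 1 = 1] is kept in
   the shape of [continuous_lin_form]. *)
pose K := [set l : PT (size (gens S)) | forall j, 0 <= l j <= 1] `&`
  ([set l | \sum_j l j * 1 = 1] `&`
   [set l | \sum_j l j * dot zeta (gen S j) = dot zeta x0]).
have -> : face (newton_of S) zeta = comb S @` K.
  apply/seteqP; split.
  - move=> x [[y [l [l_ge0 [l_sum y_eq]]] yx] x_min].
    have y_comb : y = comb S l by apply: funext => i; rewrite y_eq.
    have Dy : newton_of S y by exists y => //; exists l.
    have y_x := eq_of_dot_pos_le zeta_gt0 yx (x_min y Dy).
    exists l; last by rewrite -y_comb.
    split; [|split].
    + move=> j; rewrite l_ge0 /= -l_sum (bigD1 j) //= lerDl.
      exact: sumr_ge0.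
    + by rewrite /=; under eq_bigr do rewrite mulr1.
    + rewrite /= -dot_comb -y_comb y_x; apply: face_dot_eq x0_face.
      by split=> //; rewrite -y_x.
  - move=> _ [l [l_box [l_sum l_dot]] <-]; split.
      exists (comb S l) => //; exists l; split=> [j|].
        by case/andP: (l_box j).
      by split=> [|i //]; move: l_sum => /=; under eq_bigr do rewrite mulr1.
    by move=> y Dy; rewrite dot_comb l_dot; case: x0_face => _; exact.
apply: continuous_compact.
  apply: continuous_subspaceT; apply: continuous_into_prod => i.
  exact: continuous_lin_form.
apply: compact_closedI; first exact: compact_unit_box.
apply: closedI.
  by have := @preimage_closed (PT _) _ _ _
    (in1W (@continuous_lin_form (size (gens S)) (fun _ => 1))) (@closed_eq R 1).
by have := @preimage_closed (PT _) _ _ _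
  (in1W (@continuous_lin_form _ (fun j => dot zeta (gen S j)))) (@closed_eq R (dot zeta x0)).
Qed.

Lemma tilt_face S (xi0 xi x0 : pt) beta :
  nonneg xi0 -> nonneg xi -> face (newton_of S) xi0 x0 ->
  (forall x, face (newton_of S) xi0 x -> dot xi x = beta) ->
  (exists j, dot xi (gen S j) < beta) ->
  exists zeta v, [/\ forall i, xi0 i <= zeta i,
    face (newton_of S) xi0 `<=` face (newton_of S) zeta,
    face (newton_of S) zeta v & dot xi v < beta].
Proof.
move=> xi0_ge0 xi_ge0 x0_face face_beta [j0 j0_lt].
have [Dx0 x0_min] := x0_face.
pose p j := dot xi0 (gen S j) - dot xi0 x0.
pose q j := beta - dot xi (gen S j).
have p_ge0 j : 0 <= p j by rewrite /p subr_ge0; exact: x0_min (newton_of_gen j).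
have [|t [t_ge0 tq_le_p [j qj_gt0 tq_eq_p]]] := critical_tilt (q := q) p_ge0.
  by exists j0; rewrite subr_gt0.
pose zeta k := xi0 k + t * xi k.
have dot_zeta x : dot zeta x = dot xi0 x + t * dot xi x.
  by rewrite dotC dotDr dotZr !(dotC x).
have zeta_ge0 : nonneg zeta by move=> i; rewrite addr_ge0 ?mulr_ge0.
pose M := dot xi0 x0 + t * beta.
have M_min y : newton_of S y -> M <= dot zeta y.
  apply: newton_of_lb zeta_ge0 _ => k; rewrite dot_zeta /M.
  by have := tq_le_p k; rewrite /p /q mulrBr; lra.
have face_zeta x : newton_of S x -> dot zeta x = M -> face (newton_of S) zeta x.
  by move=> Dx x_M; split=> // y Dy; rewrite x_M; exact: M_min.
exists zeta, (gen S j); split.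
- by move=> i; rewrite lerDl mulr_ge0.
- move=> x x_face; apply: face_zeta; first by case: x_face.
  by rewrite dot_zeta face_beta // (face_dot_eq x_face x0_face).
- apply: face_zeta; first exact: newton_of_gen.
  by move: tq_eq_p; rewrite dot_zeta /M /p /q mulrBr; lra.
- by rewrite -subr_gt0.
Qed.

End NewtonPolyhedra.

Theorem lemma2p1 (R : realType) (n : nat) (D E : set ('I_n -> R))
    (a b : 'I_n -> R) :
  newton_polyhedron D -> loose_edge D E -> E = segment a b ->
  forall c xi, D c -> nonneg xi -> dot xi a = dot xi b ->
  dot xi a <= dot xi c.
Proof.
move=> [S [_ ->]] [[[xi0 xi0_ge0 E_face] _] [[_ [E_dim1 _]] E_loose]] E_seg.
move=> c xi Dc xi_ge0 xi_ab; rewrite {}E_seg in E_face E_dim1 E_loose.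
have xi0_gt0 := segment_face_dir_pos xi0_ge0 (esym E_face).
have [i0 ab_i0] := segment_dim_ge1 E_dim1.
rewrite leNgt; apply/negP => c_lt.
have a_face : face (newton_of S) xi0 a by rewrite -E_face; exact: segment_start.
have b_face : face (newton_of S) xi0 b by rewrite -E_face; exact: segment_end.
have E_level x : face (newton_of S) xi0 x -> dot xi x = dot xi a.
  by rewrite -E_face => x_seg; exact: dot_segment xi_ab.
have [zeta [v [xi0_le E_sub v_face v_lt]]] :=
  tilt_face xi0_ge0 xi_ge0 a_face E_level (newton_of_gen_lt xi_ge0 Dc c_lt).
have zeta_gt0 i : 0 < zeta i := lt_le_trans (xi0_gt0 i) (xi0_le i).
apply: E_loose; exists (face (newton_of S) zeta); split; last split.
- by split; [exists zeta => // i; exact: ltW | exact: face_newton_compact].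
- apply: dim_ge2_of_dot (E_sub a a_face) (E_sub b b_face) v_face ab_i0 xi_ab _.
  by rewrite lt_eqF.
- by rewrite E_face.
Qed.
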